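(* Let $T$ be a parity decision tree on $\{-1,1\}^n$ of depth $d$. Then there is a refinement $T'$ of $T$ which is a correlation-free parity decision tree of depth at most $2d$.
   Context: A parity decision tree on $\{-1,1\}^n$ is a rooted full binary tree whose internal nodes are labelled by subsets $S\subseteq[n]$, whose two outgoing edges are labelled $-1$ and $1$; an input $x$ follows from a node labelled $S$ the edge labelled $\prod_{i\in S}x_i$. Depth is the maximum number of internal nodes on a root-to-leaf path. A refinement of $T$ is a parity decision tree obtained from $T$ by replacing leaves with (parity decision) subtrees. A quantity (such as $x_i$ or $x_i\oplus x_j$) is fixed by the queries on a path if it is determined by the answers to the parities queried along that path. A tree is (pairwise) correlation-free (also called uncorrelated) if for every $i\ne j\in[n]$ and every path in it, whenever $x_i\oplus x_j$ is fixed by the queries in the path, so are $x_i$ and $x_j$. *)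

From mathcomp Require Import all_boot all_order all_algebra.
Set Implicit Arguments. Unset Strict Implicit. Unset Printing Implicit Defensive.
Import GRing.Theory Num.Theory.
Local Open Scope ring_scope.

(* Leaves carry no label (only the tree
   shape and queries matter for refinements / correlation-freeness).
   [PNode S tm tp]: query the parity prod_{i in S} x_i; follow [tm] on
   answer -1 and [tp] on answer 1. *)
Inductive pdt (n : nat) : Type :=
| PLeaf
| PNode of {set 'I_n} & pdt n & pdt n.

Arguments PLeaf {n}.

Fixpoint depth n (t : pdt n) : nat :=
  match t with
  | PLeaf => 0
  | PNode _ tm tp => (maxn (depth tm) (depth tp)).+1
  end.

Fixpoint refines n (t' t : pdt n) : Prop :=
  match t with
  | PLeaf => True
  | PNode Q tm tp =>
      match t' with
      | PLeaf => False
      | PNode Q' tm' tp' => Q' = Q /\ refines tm' tm /\ refines tp' tp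
      end
  end.

Fixpoint leaf_paths n (t : pdt n) : seq (seq ({set 'I_n} * int)) :=
  match t with
  | PLeaf => [:: [::]]
  | PNode Q tm tp =>
      map (cons (Q, -1)) (leaf_paths tm) ++ map (cons (Q, 1)) (leaf_paths tp)
  end.

Definition is_input n (x : 'I_n -> int) : Prop :=
  forall i, x i = 1 \/ x i = -1.

Definition parity n (S : {set 'I_n}) (x : 'I_n -> int) : int :=
  \prod_(i in S) x i.

Definition follows n (x : 'I_n -> int) (p : seq ({set 'I_n} * int)) : Prop :=
  forall q, q \in p -> parity q.1 x = q.2.

Definition fixed_by n (p : seq ({set 'I_n} * int)) (f : ('I_n -> int) -> int)
  : Prop :=
  forall x y, is_input x -> is_input y -> follows x p -> follows y p ->
    f x = f y.

(* x_i (+) x_j corresponds, in the {-1,1} encoding, to x_i * x_j *)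
Definition correlation_free n (t : pdt n) : Prop :=
  forall (i j : 'I_n), i != j -> forall p, p \in leaf_paths t ->
    fixed_by p (fun x => x i * x j) ->
    fixed_by p (fun x => x i) /\ fixed_by p (fun x => x j).

From mathcomp Require Import all_boot all_order all_algebra.
From mathcomp Require Import zify.
From Stdlib Require Import Classical FunctionalExtensionality.
Set Implicit Arguments. Unset Strict Implicit. Unset Printing Implicit Defensive.
Import GRing.Theory Num.Theory.

(* The inputs consistent with a path form an
   affine subspace C of GF(2)^n; let A be the set of coordinates constant on C.
   The defect log2 (2 ^ (n - |A|) / |C|) is 0 at the root and grows by at most
   1 per query.  If x_i x_j is fixed but x_i is not, then x_i is a function of
   x_j on C, so C is determined by its coordinates outside A and i and the
   defect is positive; querying x_i then fixes both x_i and x_j while at most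
   halving C, so the defect drops by at least 1.  Hence at a leaf of T at depth at most d, at most d such repair
   queries remove all correlations. *)

Local Open Scope ring_scope.

Lemma card_le_exp_of_agree (aT : finType) (C : {set {ffun aT -> bool}})
    (B : {set aT}) :
  {in C &, forall b c : {ffun aT -> bool}, {in B, b =1 c} -> b = c} ->
  (#|C| <= 2 ^ #|B|)%N.
Proof.
move=> agree.
pose r (b : {ffun aT -> bool}) : {ffun {k | k \in B} -> bool} := [ffun k => b (val k)].
have r_inj : {in C &, injective r}.
  move=> b c hb hc /ffunP e; apply: agree => // k kB.
  by have := e (exist _ k kB); rewrite !ffunE.
by have := @leq_card_in _ _ r C r_inj; rewrite card_ffun card_bool card_sig.
Qed.

Section ConsistentInputs.

Variable n : nat.

Local Notation query_seq := (seq ({set 'I_n} * int)).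
Local Notation bvec := {ffun 'I_n -> bool}.

Definition spin (b : bvec) : 'I_n -> int := fun i => (-1) ^+ b i.

Definition xorv (b c : bvec) : bvec := [ffun i => b i (+) c i].

Definition consistent (p : query_seq) : {set bvec} :=
  [set b | all (fun q => parity q.1 (spin b) == q.2) p].

Definition fixed_coords (p : query_seq) : {set 'I_n} :=
  [set i | [forall b in consistent p, forall c in consistent p, b i == c i]].

Lemma spin_input (b : bvec) : is_input (spin b).
Proof. by move=> i; rewrite /spin; case: (b i); [right | left]. Qed.

Lemma spin_of_input (x : 'I_n -> int) :
  is_input x -> x = spin [ffun i => x i == -1].
Proof.
move=> hx; apply: functional_extensionality => i.
by rewrite /spin ffunE; case: (hx i) => ->.
Qed.

Lemma parity_spin S (b : bvec) :
  parity S (spin b) = (-1) ^+ odd (\sum_(i in S) b i).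
Proof. by rewrite signr_odd -prodrXr. Qed.

Lemma parity_spin_xor S (b c : bvec) :
  parity S (spin (xorv b c)) = parity S (spin b) * parity S (spin c).
Proof.
by rewrite /parity -big_split; apply: eq_bigr => i _; rewrite /spin ffunE signr_addb.
Qed.

Lemma follows_spin (b : bvec) p : follows (spin b) p <-> b \in consistent p.
Proof.
rewrite inE; split => [h | /allP h q hq]; last exact/eqP/h.
by apply/allP => q hq; apply/eqP/h.
Qed.

Lemma fixed_byE p (f : ('I_n -> int) -> int) :
  fixed_by p f <->
  {in consistent p &, forall b c, f (spin b) = f (spin c)}.
Proof.
split => [h b c hb hc | h x y hx hy fx fy].
  by apply: h; rewrite ?follows_spin //; apply: spin_input.
rewrite (spin_of_input hx) (spin_of_input hy).
by apply: h; rewrite -follows_spin -spin_of_input.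
Qed.

Lemma fixed_by_consistent0 p f : consistent p = set0 -> fixed_by p f.
Proof. by move=> C0; apply/fixed_byE => b c; rewrite C0 inE. Qed.

Lemma mem_fixed_coords p i : i \in fixed_coords p <-> fixed_by p (fun x => x i).
Proof.
rewrite inE fixed_byE; split => [/forall_inP h b c hb hc | h].
  by move/forall_inP: (h b hb) => /(_ c hc)/eqP; rewrite /spin => ->.
by apply/forall_inP => b hb; apply/forall_inP => c hc; apply/eqP/signr_inj/h.
Qed.

Lemma fixed_coords_eq p i b c :
  i \in fixed_coords p -> b \in consistent p -> c \in consistent p -> b i = c i.
Proof. by rewrite inE => /forall_inP h /h /forall_inP h' /h' /eqP. Qed.

Lemma fixed_by_prodE p i j :
  fixed_by p (fun x => x i * x j) ->
  {in consistent p &, forall b c : bvec, b i (+) b j = c i (+) c j}.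
Proof.
by move/fixed_byE => h b c hb hc; apply: signr_inj; rewrite !signr_addb; exact: h.
Qed.

Lemma consistent_rcons p q :
  consistent (rcons p q) = consistent p :&: [set b | parity q.1 (spin b) == q.2].
Proof. by apply/setP => b; rewrite !inE -cats1 all_cat /= andbT. Qed.

Lemma consistent_rcons_sub p q : consistent (rcons p q) \subset consistent p.
Proof. by rewrite consistent_rcons subsetIl. Qed.

(* The consistent inputs form an affine subspace of GF(2)^n. *)
Lemma consistent_xor3 p b c e :
  b \in consistent p -> c \in consistent p -> e \in consistent p ->
  xorv (xorv b c) e \in consistent p.
Proof.
rewrite !inE => /allP hb /allP hc /allP he; apply/allP => q hq.
rewrite !parity_spin_xor (eqP (hb q hq)) (eqP (he q hq)) -(eqP (hc q hq)).
by rewrite parity_spin -mulrA signrMK.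
Qed.

Lemma xorv_xor_inj (y z : bvec) : injective (fun x => xorv (xorv x y) z).
Proof.
move=> x1 x2 /ffunP h; apply/ffunP => i.
by move: (h i); rewrite !ffunE => /addIb/addIb.
Qed.

Lemma card_consistent_rcons p q : consistent (rcons p q) != set0 ->
  (#|consistent p| <= 2 * #|consistent (rcons p q)|)%N.
Proof.
rewrite consistent_rcons; set D := [set b | _]; set C := consistent p.
case/set0Pn => y; rewrite inE => /andP [yC yD].
rewrite -(cardsID D C) mul2n -addnn leq_add2l.
have [->|[z]] := set_0Vmem (C :\: D); first by rewrite cards0.
rewrite inE => /andP [zD zC].
rewrite -(card_imset _ (xorv_xor_inj (y:=y) (z:=z))); apply/subset_leq_card/subsetP.
move=> _ /imsetP [x + ->]; rewrite inE => /andP [xD xC].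
rewrite inE consistent_xor3 //= /D.
move: xD zD yD; rewrite !inE !parity_spin_xor !parity_spin => xD zD /eqP yq.
rewrite -yq !(inj_eq signr_inj) in xD zD *; rewrite -!signr_addb (inj_eq signr_inj).
by case: (odd _) xD; case: (odd _) zD; case: (odd _).
Qed.

Lemma fixed_coords_sub p p' :
  consistent p' \subset consistent p -> fixed_coords p \subset fixed_coords p'.
Proof.
move/subsetP => s; apply/subsetP => i; rewrite !inE.
move/forall_inP => h; apply/forall_inP => b hb; apply/forall_inP => c hc.
by move/forall_inP: (h b (s b hb)) => /(_ c (s c hc)).
Qed.

Lemma fixed_by_rcons (p : query_seq) q (f : ('I_n -> int) -> int) :
  fixed_by p f -> fixed_by (rcons p q) f.
Proof.
move=> h x y hx hy fx fy; apply: h => // r hr.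
  by apply: fx; rewrite mem_rcons inE hr orbT.
by apply: fy; rewrite mem_rcons inE hr orbT.
Qed.

Lemma fixed_by_query (p : query_seq) (i : 'I_n) s :
  fixed_by (rcons p ([set i], s)) (fun x => x i).
Proof.
move=> x y _ _ fx fy.
have := fx ([set i], s); have := fy ([set i], s).
by rewrite mem_rcons mem_head /parity !big_set1 => -> // ->.
Qed.

Lemma fixed_by_prodC (p : query_seq) (i j : 'I_n) :
  fixed_by p (fun x => x i * x j) -> fixed_by p (fun x => x j * x i).
Proof. by move=> h x y hx hy fx fy; rewrite mulrC [y j * _]mulrC; exact: h. Qed.

Lemma fixed_by_prod_fixedr (p : query_seq) (i j : 'I_n) :
  fixed_by p (fun x => x i * x j) -> fixed_by p (fun x => x j) ->
  fixed_by p (fun x => x i).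
Proof.
move=> hij hj x y hx hy fx fy.
have yj0 : y j != 0 by case: (hy j) => ->.
by apply: (mulIf yj0); rewrite -{1}(hj x y hx hy fx fy); exact: hij.
Qed.

Definition defect_at_most (m : nat) (p : query_seq) : Prop :=
  consistent p = set0 \/
  (2 ^ (n - #|fixed_coords p|) <= 2 ^ m * #|consistent p|)%N.

Lemma defect_at_most_rcons m p q :
  defect_at_most m p -> defect_at_most m.+1 (rcons p q).
Proof.
have sub := consistent_rcons_sub p q.
have [C'0 _|ne] := eqVneq (consistent (rcons p q)) set0; first by left.
case=> [C0 | h]; first by case/set0Pn: ne => y /(subsetP sub); rewrite C0 inE.
right; have A_le := subset_leq_card (fixed_coords_sub sub).
apply: (@leq_trans (2 ^ (n - #|fixed_coords p|))); first by rewrite leq_exp2l //; lia.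
apply: (leq_trans h).
by rewrite expnSr -mulnA leq_mul2l card_consistent_rcons // orbT.
Qed.

Definition correlated (p : query_seq) (i j : 'I_n) : Prop :=
  [/\ i != j, fixed_by p (fun x => x i * x j) & ~ fixed_by p (fun x => x i)].

Section Correlated.

Variables (p : query_seq) (i j : 'I_n).
Hypothesis hc : correlated p i j.

Lemma correlated_consistent_neq0 : consistent p != set0.
Proof.
by case: hc => _ _ ni; apply/eqP => C0; apply/ni/fixed_by_consistent0.
Qed.

Lemma correlated_not_fixed :
  i \notin fixed_coords p /\ j \notin fixed_coords p.
Proof.
case: hc => _ hij ni; split; apply/negP => /mem_fixed_coords hfix; apply: ni => //.
exact: fixed_by_prod_fixedr hfix.
Qed.

Lemma card_consistent_correlated :
  (2 * #|consistent p| <= 2 ^ (n - #|fixed_coords p|))%N.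
Proof.
case: hc => ij hij _; have [iA jA] := correlated_not_fixed.
set A := fixed_coords p; set B := ~: (i |: A).
have cardB : (#|B|).+1 = (n - #|A|)%N.
  have := cardsC (i |: A); rewrite -/B cardsU1 iA card_ord /=.
  by move: #|A| #|B| => a b; lia.
rewrite -cardB expnS leq_mul2l /=.
apply: card_le_exp_of_agree => b c hb hc' agree; apply/ffunP => k.
have jB : j \in B by rewrite in_setC in_setU1 negb_or eq_sym ij jA.
have [kA|kA] := boolP (k \in A); first exact: fixed_coords_eq kA hb hc'.
have [->|ki] := eqVneq k i.
  by have := fixed_by_prodE hij hb hc'; rewrite (agree j jB) => /addIb.
by apply: agree; rewrite in_setC in_setU1 negb_or ki kA.
Qed.

Lemma correlated_defect_gt0 m : defect_at_most m p -> (0 < m)%N.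
Proof.
have C_gt0 : (0 < #|consistent p|)%N.
  by rewrite card_gt0 correlated_consistent_neq0.
case=> [C0 | h]; first by move: correlated_consistent_neq0; rewrite C0 eqxx.
have := leq_trans card_consistent_correlated h.
by case: m {h} => //; rewrite expn0 mul1n; lia.
Qed.

Lemma defect_at_most_query m s :
  defect_at_most m.+1 p -> defect_at_most m (rcons p ([set i], s)).
Proof.
case: hc => ij hij _; have [iA jA] := correlated_not_fixed.
case=> [C0 | h]; first by move: correlated_consistent_neq0; rewrite C0 eqxx.
set p' := rcons p _.
have [C'0|ne] := eqVneq (consistent p') set0; [by left | right].
have halve : (#|consistent p| <= 2 * #|consistent p'|)%N.
  exact: card_consistent_rcons.
have iA' : i \in fixed_coords p' by apply/mem_fixed_coords/fixed_by_query.
have jA' : j \in fixed_coords p'.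
  have hij' := fixed_by_rcons (q := ([set i], s)) hij.
  apply/mem_fixed_coords/(fixed_by_prod_fixedr (i := j) (j := i)).
    exact: fixed_by_prodC hij'.
  exact/mem_fixed_coords.
have A'_ge : (#|fixed_coords p| + 2 <= #|fixed_coords p'|)%N.
  have <- : #|i |: (j |: fixed_coords p)| = (#|fixed_coords p| + 2)%N.
    by rewrite !cardsU1 in_setU1 negb_or ij iA jA addn2.
  apply/subset_leq_card/subsetP => k; rewrite !in_setU1.
  case/or3P => [/eqP-> | /eqP-> | kA] //.
  exact: (subsetP (fixed_coords_sub (consistent_rcons_sub _ _))).
have A'_le : (#|fixed_coords p'| <= n)%N.
  by have := max_card (fixed_coords p'); rewrite card_ord.
have gain :
    (2 ^ (n - #|fixed_coords p'|) * 2 ^ 2 <= 2 ^ (n - #|fixed_coords p|))%N.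
  by rewrite -expnD leq_exp2l //; lia.
rewrite -(leq_pmul2r (expn_gt0 2 2)); apply: leq_trans (leq_trans gain h) _.
by rewrite expnSr; move: (2 ^ m)%N halve => P; nia.
Qed.

End Correlated.

Lemma defect_at_most_nil : defect_at_most 0 [::].
Proof.
right; have -> : consistent [::] = setT by apply/setP => b; rewrite !inE.
by rewrite mul1n cardsT card_ffun card_bool card_ord leq_exp2l // leq_subr.
Qed.

Definition uncorrelated_path (p : query_seq) : Prop :=
  forall i j : 'I_n, i != j -> fixed_by p (fun x => x i * x j) ->
    fixed_by p (fun x => x i) /\ fixed_by p (fun x => x j).

Lemma uncorrelated_path_of_no_correlated p :
  ~ (exists i j, correlated p i j) -> uncorrelated_path p.
Proof.
move=> none i j ij hij; split; apply: NNPP => nfix; apply: none.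
  by exists i, j.
exists j, i; split=> //; [by rewrite eq_sym | exact: fixed_by_prodC].
Qed.

Lemma leaf_paths_node_cat (P : query_seq -> Prop) p Q (tm tp : pdt n) :
  (forall q, q \in leaf_paths tm -> P (rcons p (Q, -1) ++ q)) ->
  (forall q, q \in leaf_paths tp -> P (rcons p (Q, 1) ++ q)) ->
  forall q, q \in leaf_paths (PNode Q tm tp) -> P (p ++ q).
Proof.
move=> hm hp q; rewrite /= mem_cat => /orP [] /mapP [q' hq' ->].
  by rewrite -cat_rcons; apply: hm.
by rewrite -cat_rcons; apply: hp.
Qed.

Lemma decorrelate m p : defect_at_most m p ->
  exists U : pdt n, (depth U <= m)%N /\
    forall q, q \in leaf_paths U -> uncorrelated_path (p ++ q).
Proof.
elim: m p => [|m IH] p hdef.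
all: have [[i [j hc]] | none] := classic (exists i j, correlated p i j).
2, 4: by exists PLeaf; split=> // q; rewrite inE => /eqP ->; rewrite cats0;
        apply: uncorrelated_path_of_no_correlated.
  by have := correlated_defect_gt0 hc hdef.
have [Um [dm hm]] := IH _ (defect_at_most_query hc (-1) hdef).
have [Up [dp hp]] := IH _ (defect_at_most_query hc 1 hdef).
exists (PNode [set i] Um Up); split; first by rewrite /= ltnS geq_max dm dp.
exact: leaf_paths_node_cat.
Qed.

Lemma refine_decorrelated (T : pdt n) m p : defect_at_most m p ->
  exists T' : pdt n, [/\ refines T' T, (depth T' <= 2 * depth T + m)%N &
    forall q, q \in leaf_paths T' -> uncorrelated_path (p ++ q)].
Proof.
elim: T m p => [|Q tm IHm tp IHp] m p hdef.
  have [U [dU hU]] := decorrelate hdef.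
  by exists U; split; [case: U {dU hU} | rewrite muln0 | ].
have [Tm [rm dm hm]] := IHm _ _ (defect_at_most_rcons (Q, -1) hdef).
have [Tp [rp dp hp]] := IHp _ _ (defect_at_most_rcons (Q, 1) hdef).
exists (PNode Q Tm Tp); split; [by [] | | exact: leaf_paths_node_cat].
by move: dm dp => /=; lia.
Qed.

End ConsistentInputs.

Theorem proposition2 (n : nat) (T : pdt n) (d : nat) :
  depth T = d ->
  exists T' : pdt n, refines T' T /\ correlation_free T' /\ (depth T' <= 2 * d)%N.
Proof.
move=> <-.
have [T' [rT dT unc]] := refine_decorrelated T (defect_at_most_nil n).
exists T'; split=> //; split; last by rewrite addn0 in dT.
by move=> i j ij q hq; apply: unc hq i j ij.
Qed.
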